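(* Let $x\in[0,1)$ be a $b$-imal number of depth $l$, and let $X$ be the string of length $l$ with $n(X)/b^l=x$. Let $j$ be the number of occurrences of $d$ in $X$. Let $l'\ge l$, and set $j'=j$ if $d>0$ and $j'=j+l'-l$ if $d=0$. Let $U$ be any subset of the open interval $(x,x+b^{-l'})$ and let $k\in\mathbb N$. Then: if $k<j'$, $\mu_k(U)=0$; if $k\ge j'$, $\mu_k(U)=b^{-l'}\mu_{k-j'}\big(b^{l'}U-b^{l'}x\big)$, where $b^{l'}U-b^{l'}x=\{b^{l'}(y-x):y\in U\}$.
   Context: Fix $b\ge2$ and $d\in\{0,\dots,b-1\}$; $\mathbb N=\{0,1,2,\dots\}$. A $b$-imal number is an element of $\bigcup_{l\ge0}b^{-l}\mathbb Z$; its depth is the smallest $l\ge0$ with $x\in b^{-l}\mathbb Z$. A string is a finite sequence $X=(d_l,\dots,d_1)$ of digits in $\{0,\dots,b-1\}$ (leading zeros allowed), of length $|X|=l\ge0$; its value is $n(X)=\sum_{i=1}^{l}d_ib^{i-1}$ ($0$ for the empty string). For $k\ge0$, $\mu_k=\sum_{X}b^{-|X|}\delta_{n(X)/b^{|X|}}$, the sum over all strings $X$ containing $d$ exactly $k$ times (masses at the same point add); it is a measure on $[0,1)$ of total mass $b$, defined on all subsets. *)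

From HB Require Import structures.
From mathcomp Require Import all_boot all_order all_algebra.
From mathcomp Require Import all_classical all_reals all_analysis.
Set Implicit Arguments. Unset Strict Implicit. Unset Printing Implicit Defensive.
Import Order.TTheory GRing.Theory Num.Theory.
Local Open Scope ring_scope.
Local Open Scope classical_set_scope.

(* A string of length l over digits {0..b-1}: X i is the digit d_{i+1}
   (the coefficient of b^i), i.e. X = (d_l, ..., d_1) with X i = d_{i+1}. *)
Definition bstring (b l : nat) := {ffun 'I_l -> 'I_b}.

Definition bvalue (b l : nat) (X : bstring b l) : nat :=
  (\sum_(i < l) (X i : nat) * b ^ i)%N.

Definition docc (b l : nat) (d : 'I_b) (X : bstring b l) : nat :=
  #|[set i | X i == d]|.

Definition bpoint (R : realType) (b l : nat) (X : bstring b l) : R :=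
  (bvalue X)%:R / (b%:R ^+ l).

(* mu_k(U) = sum over all strings X with exactly k occurrences of d and
   n(X)/b^|X| in U of b^(-|X|); grouped by length, as a series of
   nonnegative extended reals. *)
Definition mu (R : realType) (b : nat) (d : 'I_b) (k : nat) (U : set R) : \bar R :=
  (\sum_(0 <= l <oo)
     ((\sum_(X : bstring b l | (docc d X == k) && (bpoint R X \in U))
        (b%:R ^- l : R))%R)%:E)%E.

Definition in_bgrid (R : realType) (b l : nat) (x : R) : Prop :=
  exists z : int, x = z%:~R / (b%:R ^+ l).
Definition bdepth (R : realType) (b l : nat) (x : R) : Prop :=
  in_bgrid b l x /\ (forall l0 : nat, (l0 < l)%N -> ~ in_bgrid b l0 x).

From HB Require Import structures.
From mathcomp Require Import all_boot all_order all_algebra.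
From mathcomp Require Import all_classical all_reals all_analysis.
From mathcomp Require Import zify ring.
Import Order.TTheory GRing.Theory Num.Theory.
Set Implicit Arguments. Unset Strict Implicit. Unset Printing Implicit Defensive.

(** Appending l' - l zero digits to X gives a string W of length l' with
    point x and with j' occurrences of d. A string whose point lies in the open
    window (x, x + b^-l') must be longer than W and begin with W: writing it as
    W Z, its point is x + b^-l' n(Z)/b^|Z| and it contains j' + (occurrences
    in Z) copies of d. Strings of length at most l' have points on the grid
    b^-l' Z and miss the window. So Z |-> W Z matches the strings counted by
    mu_(k-j') of the rescaled set with those counted by mu_k(U), and the
    weights differ by the factor b^-l'. *)

Section Strings.
Variable b : nat.

Definition btail l (Y : bstring b l.+1) : bstring b l := [ffun i => Y (lift ord0 i)].

Lemma bvalue_recl l (Y : bstring b l.+1) :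
  bvalue Y = (Y ord0 + b * bvalue (btail Y))%N.
Proof.
rewrite /bvalue big_ord_recl /= expn0 muln1; congr (_ + _)%N.
rewrite big_distrr /=; apply: eq_bigr => i _; rewrite ffunE /= expnS; lia.
Qed.

Lemma bvalue_lt l (Y : bstring b l) : (bvalue Y < b ^ l)%N.
Proof.
elim: l Y => [|l IH] Y; first by rewrite /bvalue big_ord0.
rewrite bvalue_recl expnS.
have := IH (btail Y); have : (Y ord0 < b)%N := ltn_ord _.
have : (b * (bvalue (btail Y)).+1 <= b * b ^ l)%N by rewrite leq_mul2l IH orbT.
lia.
Qed.

Lemma bvalue_inj l : injective (@bvalue b l).
Proof.
elim: l => [|l IH] Y W; first by move=> _; apply/ffunP => -[].
rewrite !bvalue_recl => E.
have b_gt0 : (0 < b)%N by case: (Y ord0) => i /=; lia.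
have Y0 : Y ord0 = W ord0.
  apply: val_inj => /=; have := congr1 (modn^~ b) E.
  by rewrite ![(_ + b * _)%N]addnC ![(b * _)%N]mulnC !modnMDl !modn_small.
move: E; rewrite Y0 => /addnI /eqP; rewrite eqn_mul2l gtn_eqF //= => /eqP E.
have tailE := IH _ _ E.
apply/ffunP => i; case: (unliftP ord0 i) => [j ->|->] //.
by have := congr1 (fun f : bstring b l => f j) tailE; rewrite !ffunE.
Qed.

Lemma doccE l (d : 'I_b) (Y : bstring b l) :
  docc d Y = (\sum_(i < l) (Y i == d))%N.
Proof.
rewrite /docc -sum1_card big_mkcond /=; apply: eq_bigr => i _.
by case: ifPn => [|/negP]; rewrite in_setE /=; case: (Y i == d).
Qed.

Definition blow n m (Y : bstring b (n + m)) : bstring b n := [ffun i => Y (lshift m i)].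
Definition bhigh n m (Y : bstring b (n + m)) : bstring b m := [ffun i => Y (rshift n i)].
Definition bcat n m (Z : bstring b n) (W : bstring b m) : bstring b (n + m) :=
  [ffun i => match fintype.split i with inl a => Z a | inr c => W c end].

Lemma blow_cat n m Z W : @blow n m (bcat Z W) = Z.
Proof. by apply/ffunP => i; rewrite !ffunE -[lshift m i]/(unsplit (inl i)) unsplitK. Qed.

Lemma bhigh_cat n m Z W : @bhigh n m (bcat Z W) = W.
Proof. by apply/ffunP => i; rewrite !ffunE -[rshift n i]/(unsplit (inr i)) unsplitK. Qed.

Lemma bcatK n m (Y : bstring b (n + m)) : bcat (blow Y) (bhigh Y) = Y.
Proof.
apply/ffunP => i; rewrite ffunE -[in RHS](splitK i).
by case: (fintype.split i) => a; rewrite ffunE.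
Qed.

Lemma bvalue_split n m (Y : bstring b (n + m)) :
  bvalue Y = (bvalue (blow Y) + b ^ n * bvalue (bhigh Y))%N.
Proof.
rewrite /bvalue big_split_ord /=; congr (_ + _)%N.
  by apply: eq_bigr => i _; rewrite ffunE.
rewrite big_distrr /=; apply: eq_bigr => i _; rewrite ffunE /= expnD; lia.
Qed.

Lemma docc_split n m (d : 'I_b) (Y : bstring b (n + m)) :
  docc d Y = (docc d (blow Y) + docc d (bhigh Y))%N.
Proof.
rewrite !doccE big_split_ord /=; congr (_ + _)%N.
all: by apply: eq_bigr => i _; rewrite ffunE.
Qed.

Lemma bvalue_const0 p (z : 'I_b) : z = 0%N :> nat ->
  bvalue ([ffun=> z] : bstring b p) = 0%N.
Proof. by move=> z0; rewrite /bvalue big1 // => i _; rewrite ffunE z0. Qed.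

Lemma docc_const0 p (z d : 'I_b) : z = 0%N :> nat ->
  docc d ([ffun=> z] : bstring b p) = if (0 < d)%N then 0%N else p.
Proof.
move=> z0; rewrite doccE (eq_bigr (fun=> nat_of_bool (z == d))) => [|i _]; last by rewrite ffunE.
rewrite sum_nat_const card_ord.
have -> : (z == d) = ~~ (0 < d)%N.
  by apply/eqP/idP => [<-|d0]; [rewrite z0 | apply: val_inj => /=; lia].
by case: (0 < d)%N; rewrite ?muln0 ?muln1.
Qed.

End Strings.

Local Open Scope ring_scope.
Local Open Scope classical_set_scope.

Section Window.
Variables (R : realType) (b : nat).
Hypothesis b_gt0 : (0 < b)%N.

Let bR_neq0 : (b%:R : R) != 0. Proof. by rewrite pnatr_eq0 -lt0n. Qed.
Let bR_gt0 : (0 : R) < b%:R. Proof. by rewrite ltr0n. Qed.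

Lemma bfrac_pad m e N : (N%:R / b%:R ^+ m : R) = (N * b ^ e)%:R / b%:R ^+ (m + e).
Proof. by rewrite natrM natrX exprD; field; rewrite !expf_neq0. Qed.

Lemma ltr_bfrac m (M N : nat) :
  ((M%:R / b%:R ^+ m : R) < N%:R / b%:R ^+ m) = (M < N)%N.
Proof. by rewrite ltr_pM2r ?invr_gt0 ?exprn_gt0 // ltr_nat. Qed.

Lemma bpoint_pad0 p l (z : 'I_b) (X : bstring b l) : z = 0%N :> nat ->
  bpoint R (bcat ([ffun=> z] : bstring b p) X) = bpoint R X.
Proof.
move=> z0; rewrite /bpoint bvalue_split blow_cat bhigh_cat bvalue_const0 //.
by rewrite add0n mulnC (bfrac_pad l p) addnC.
Qed.

Variables (L : nat) (W : bstring b L).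

Definition bwindow : set R := `]bpoint R W, bpoint R W + b%:R ^- L[.

Definition brescale (U : set R) : set R :=
  [set b%:R ^+ L * (y - bpoint R W) | y in U].

Lemma bwindow_upper : bpoint R W + b%:R ^- L = (bvalue W).+1%:R / b%:R ^+ L.
Proof. by rewrite /bpoint -addn1 natrD mulrDl mul1r. Qed.

Lemma bpoint_short_notin_window m (Y : bstring b m) :
  (m <= L)%N -> ~ bwindow (bpoint R Y).
Proof.
move=> mL; rewrite /bwindow /= in_itv /= bwindow_upper.
rewrite /bpoint (bfrac_pad m (L - m)) (subnKC mL) !ltr_bfrac; lia.
Qed.

Lemma bhigh_window n (Y : bstring b (n + L)) : bwindow (bpoint R Y) -> bhigh Y = W.
Proof.
rewrite /bwindow /= in_itv /= bwindow_upper /bpoint !(bfrac_pad L n) [(L + n)%N]addnC.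
rewrite !ltr_bfrac bvalue_split => lt_Y.
apply: bvalue_inj; have := bvalue_lt (blow Y); move: lt_Y.
set lo := bvalue (blow Y); set hi := bvalue (bhigh Y); set q := (b ^ n)%N; nia.
Qed.

Lemma rescale_bpoint n (Y : bstring b (n + L)) :
  bhigh Y = W -> b%:R ^+ L * (bpoint R Y - bpoint R W) = bpoint R (blow Y).
Proof.
move=> YW; rewrite /bpoint bvalue_split YW natrD natrM natrX exprD.
by field; rewrite !expf_neq0.
Qed.

End Window.

Section WindowMeasure.
Variables (R : realType) (b : nat) (d : 'I_b) (L : nat) (W : bstring b L).
Hypothesis b_gt0 : (0 < b)%N.
Variables (U : set R) (k : nat).
Hypothesis U_window : U `<=` bwindow W.

Let in_window m (Y : bstring b m) : bpoint R Y \in U -> bwindow W (bpoint R Y).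
Proof. by rewrite in_setE => /U_window. Qed.

Lemma mu_window_long :
  mu d k U = (\sum_(n <oo)
    ((\sum_(Y : bstring b (n + L) | (docc d Y == k) && (bpoint R Y \in U))
       (b%:R ^- (n + L) : R))%R)%:E)%E.
Proof.
have term_ge0 m : (0 <= (\sum_(Y : bstring b m | (docc d Y == k) && (bpoint R Y \in U))
                           (b%:R ^- m : R))%:E)%E.
  by rewrite lee_fin sumr_ge0 // => ? _; rewrite invr_ge0 exprn_ge0 // ler0n.
rewrite /mu (nneseries_split 0 L) // add0n big_nat_cond big1 ?add0e.
  by rewrite -(nneseries_addn L term_ge0).
move=> m /andP[/andP[_ mL] _]; rewrite big1 // => Y /andP[_ /in_window].
by move/(bpoint_short_notin_window b_gt0 (ltnW mL)).
Qed.

Lemma docc_window n (Y : bstring b (n + L)) : bpoint R Y \in U ->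
  docc d Y = (docc d (blow Y) + docc d W)%N.
Proof.
by move=> /in_window /(bhigh_window b_gt0) YW; rewrite docc_split YW.
Qed.

Lemma mu_window_lt : (k < docc d W)%N -> mu d k U = 0%E.
Proof.
move=> kW; rewrite mu_window_long; apply: eseries0 => n _ _.
rewrite big1 // => Y /andP[/eqP kY /docc_window]; lia.
Qed.

Lemma card_window n : (docc d W <= k)%N ->
  #|[pred Y : bstring b (n + L) | (docc d Y == k) && (bpoint R Y \in U)]| =
  #|[pred Z : bstring b n | (docc d Z == k - docc d W)%N
                            && (bpoint R Z \in brescale W U)]|.
Proof.
move=> Wk.
have cat_inj : injective (fun Z : bstring b n => bcat Z W).
  by move=> Z1 Z2 /(congr1 (@blow b n L)); rewrite !blow_cat.
rewrite -(fintype.card_image cat_inj); apply: eq_card => Y; apply/idP/fintype.imageP.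
- move=> /andP[/eqP kY UY]; have YW := bhigh_window b_gt0 (in_window UY).
  exists (blow Y); last by rewrite -{1}(bcatK Y) YW.
  rewrite inE; apply/andP; split; first by rewrite -kY docc_window // addnK.
  rewrite in_setE; exists (bpoint R Y); first by rewrite -in_setE.
  exact: rescale_bpoint.
- case=> Z; rewrite inE => /andP[/eqP kZ]; rewrite in_setE => -[y Uy yZ] ->.
  rewrite inE docc_split blow_cat bhigh_cat kZ subnK // eqxx /=.
  have := rescale_bpoint R b_gt0 (bhigh_cat Z W); rewrite blow_cat -yZ.
  have bL_neq0 : (b%:R ^+ L : R) != 0 by rewrite expf_neq0 // pnatr_eq0 -lt0n.
  by move=> /(mulfI bL_neq0) /addIr ->; rewrite in_setE.
Qed.

Lemma mu_window_ge : (docc d W <= k)%N ->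
  mu d k U = ((b%:R ^- L : R)%:E * mu d (k - docc d W) (brescale W U))%E.
Proof.
move=> Wk; rewrite mu_window_long /mu -nneseriesZl; last first.
  by move=> m _; rewrite lee_fin sumr_ge0 // => ? _; rewrite invr_ge0 exprn_ge0 // ler0n.
apply/congr_lim/funext => N; apply: eq_bigr => n _; rewrite -EFinM; congr (_%:E).
rewrite !sumr_const exprD invfM mulrnAr mulrC; congr (_ *+ _).
exact: card_window.
Qed.

End WindowMeasure.

Theorem mainTheorem12 (R : realType) (b : nat) (d : 'I_b) (x : R) (l : nat)
    (X : bstring b l) (l' : nat) (U : set R) (k : nat) :
  (2 <= b)%N ->
  0 <= x -> x < 1 ->
  bdepth b l x ->
  bpoint R X = x ->
  (l <= l')%N ->
  U `<=` `]x, x + (b%:R ^- l')[ ->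
  let j := docc d X in
  let j' := if (0 < (d : nat))%N then j else (j + (l' - l))%N in
  ((k < j')%N -> mu d k U = 0%E) /\
  ((j' <= k)%N ->
     mu d k U =
       ((b%:R ^- l' : R)%:E *
          mu d (k - j')%N [set ((b%:R ^+ l' : R) * (y - x))%R | y in U])%E).
Proof.
move=> b_ge2 _ _ _ <- ll'.
have b_gt0 : (0 < b)%N by lia.
have [p ->] : exists p, l' = (p + l)%N by exists (l' - l)%N; rewrite subnK.
rewrite addnK => U_window j j'.
pose z : 'I_b := Ordinal b_gt0.
pose W := bcat ([ffun=> z] : bstring b p) X.
have WX : bpoint R W = bpoint R X by exact: bpoint_pad0.
have doccW : docc d W = j'.
  rewrite docc_split blow_cat bhigh_cat docc_const0 // /j' /j.
  by case: (0 < d)%N; rewrite ?add0n // addnC.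
rewrite -WX -doccW in U_window *.
split; [exact: mu_window_lt | exact: mu_window_ge].
Qed.
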